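(* Let $(\Theta,\mathbf{Q},\leq)$ be a $\Theta$-projective system of size $t$ in a Hom-finite triangulated $R$-category $\mathcal{T}$, let $M\in\mathfrak{F}(\Theta)$ and $i:=\min(M)$. Then there exists a distinguished triangle $N\to Q_0(M)\xrightarrow{\varepsilon_M}M\to N[1]$ in $\mathcal{T}$ such that: (a) $N\in\mathfrak{F}(\Theta)$ and $Q_0(M)\in\mathrm{add}(\bigoplus_{j\ge i}Q(j))$; (b) $\min(M)<\min(N)$ if $M\neq0$; (c) $\varepsilon_M$ is a $\mathcal{P}(\Theta)$-precover of $M$.
   Context: A Hom-finite triangulated $R$-category: $R$ a commutative ring, $\mathcal{T}$ triangulated with $R$-module Hom-sets that are finitely generated, $R$-bilinear composition and $R$-linear shift. $\mathfrak{F}(\mathcal{X})$: objects $M$ admitting distinguished triangles $M_{k-1}\to M_k\to X_k\to M_{k-1}[1]$ ($k=0,\dots,n$), $M_{-1}=0=X_0$, $M_n=M$, $X_k\in\mathcal{X}$ for $k\ge1$. A $\Theta$-projective system of size $t$: $\le$ a linear order on $[1,t]$; $\Theta(i)$ non-zero with $\mathrm{Hom}(\Theta(j),\Theta(i))=0$ for $j>i$; $Q(i)$ indecomposable with $Q=\bigoplus Q(i)$ satisfying $\mathrm{Hom}(Q,\Theta(j)[\pm1])=0$ for all $j$; for each $i$ a distinguished triangle $K(i)\to Q(i)\to\Theta(i)\to K(i)[1]$ with $K(i)\in\mathfrak{F}(\{\Theta(j):j>i\})$, $\mathrm{Hom}(K(i)[1],\Theta(i))=0$. For $M\in\mathfrak{F}(\Theta)$,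 $[M:\Theta(i)]$ is the number of indices $k$ with $X_k\simeq\Theta(i)$ in a $\Theta$-filtration of $M$ (independent of the filtration in this setting); $\mathrm{Supp}_\Theta(M)=\{i:[M:\Theta(i)]\ne0\}$; $\min(M)$ is the $\le$-minimum of $\mathrm{Supp}_\Theta(M)$ for $M\neq0$, and $\min(0)=+\infty$. $\mathcal{P}(\Theta)=\{Z:\mathrm{Hom}(Z,L[1])=0\ \forall L\in\mathfrak{F}(\Theta)\}$; a $\mathcal{P}(\Theta)$-precover of $M$ is a morphism $X\to M$ with $X\in\mathcal{P}(\Theta)$ through which every morphism from an object of $\mathcal{P}(\Theta)$ to $M$ factors. $\mathrm{add}(X)$ denotes direct summands of finite direct sums of copies of $X$; $j\ge i$ refers to the order $\le$. *)

From HB Require Import structures.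
From mathcomp Require Import all_boot all_order all_algebra.
Set Implicit Arguments. Unset Strict Implicit. Unset Printing Implicit Defensive.
Import GRing.Theory.
Local Open Scope ring_scope.

Record RCat (R : comPzRingType) := {
  obj :> Type;
  Mor : obj -> obj -> lmodType R;
  idm : forall X, Mor X X;
  mcomp : forall X Y Z, Mor Y Z -> Mor X Y -> Mor X Z;
  compA : forall X Y Z W (h : Mor Z W) (g : Mor Y Z) (f : Mor X Y),
    mcomp h (mcomp g f) = mcomp (mcomp h g) f;
  comp1m : forall X Y (f : Mor X Y), mcomp (idm Y) f = f;
  compm1 : forall X Y (f : Mor X Y), mcomp f (idm X) = f;
  compDl : forall X Y Z (g1 g2 : Mor Y Z) (f : Mor X Y),
    mcomp (g1 + g2) f = mcomp g1 f + mcomp g2 f;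
  compDr : forall X Y Z (g : Mor Y Z) (f1 f2 : Mor X Y),
    mcomp g (f1 + f2) = mcomp g f1 + mcomp g f2;
  compZl : forall X Y Z (a : R) (g : Mor Y Z) (f : Mor X Y),
    mcomp (a *: g) f = a *: mcomp g f;
  compZr : forall X Y Z (a : R) (g : Mor Y Z) (f : Mor X Y),
    mcomp g (a *: f) = a *: mcomp g f }.

Arguments Mor {R C} X Y : rename.
Arguments idm {R C} X : rename.
Arguments mcomp {R C X Y Z} g f : rename.

Section CatDefs.
Variables (R : comPzRingType) (C : RCat R).

Definition is_iso (X Y : C) (f : Mor X Y) : Prop :=
  exists g : Mor Y X, mcomp g f = idm X /\ mcomp f g = idm Y.

Definition iso (X Y : C) : Prop := exists f : Mor X Y, is_iso f.

Definition is_zero (X : C) : Prop := idm X = 0.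

Definition is_biprod (X Y S : C) (i1 : Mor X S) (i2 : Mor Y S)
    (p1 : Mor S X) (p2 : Mor S Y) : Prop :=
  [/\ mcomp p1 i1 = idm X, mcomp p2 i2 = idm Y, mcomp p1 i2 = 0,
      mcomp p2 i1 = 0 & mcomp i1 p1 + mcomp i2 p2 = idm S].

Definition is_dsum (I : finType) (P : pred I) (A : I -> C) (S : C)
    (inj : forall k, Mor (A k) S) (proj : forall k, Mor S (A k)) : Prop :=
  [/\ (forall k, P k -> mcomp (proj k) (inj k) = idm (A k)),
      (forall k l, P k -> P l -> k != l -> mcomp (proj k) (inj l) = 0)
    & \sum_(k | P k) mcomp (inj k) (proj k) = idm S].

Definition is_dsum_of (I : finType) (P : pred I) (A : I -> C) (S : C) : Prop :=
  exists (inj : forall k, Mor (A k) S) (proj : forall k, Mor S (A k)),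
    @is_dsum I P A S inj proj.

Definition in_add (X Y : C) : Prop :=
  exists (n : nat) (S : C), is_dsum_of (I := 'I_n) predT (fun _ => X) S /\
    exists (Y' : C) (i1 : Mor Y S) (i2 : Mor Y' S) (p1 : Mor S Y) (p2 : Mor S Y'),
      is_biprod i1 i2 p1 p2.

Definition indecomposable (X : C) : Prop :=
  ~ is_zero X /\
  forall (A B : C) (i1 : Mor A X) (i2 : Mor B X) (p1 : Mor X A) (p2 : Mor X B),
    is_biprod i1 i2 p1 p2 -> is_zero A \/ is_zero B.

Definition hom_finite : Prop :=
  forall X Y : C, exists (n : nat) (v : 'I_n -> Mor X Y),
    forall f : Mor X Y, exists c : 'I_n -> R, f = \sum_(k < n) c k *: v k.

End CatDefs.

Record Triangulated (R : comPzRingType) (C : RCat R) := {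
  sh : C -> C;
  shm : forall X Y : C, Mor X Y -> Mor (sh X) (sh Y);
  shm1 : forall X : C, shm (idm X) = idm (sh X);
  shmM : forall (X Y Z : C) (g : Mor Y Z) (f : Mor X Y),
    shm (mcomp g f) = mcomp (shm g) (shm f);
  shmD : forall (X Y : C) (f g : Mor X Y), shm (f + g) = shm f + shm g;
  shmZ : forall (X Y : C) (a : R) (f : Mor X Y), shm (a *: f) = a *: shm f;
  shm_bij : forall X Y : C, bijective (@shm X Y);
  sh_esurj : forall Y : C, exists X : C, iso (sh X) Y;
  has_zero : exists Z : C, is_zero Z;
  has_biprod : forall X Y : C, exists (S : C) (i1 : Mor X S) (i2 : Mor Y S)
      (p1 : Mor S X) (p2 : Mor S Y), is_biprod i1 i2 p1 p2;
  dist : forall X Y Z : C, Mor X Y -> Mor Y Z -> Mor Z (sh X) -> Prop;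
  TR1_id : forall X Z : C, is_zero Z ->
    dist (idm X) (0 : Mor X Z) (0 : Mor Z (sh X));
  TR1_ext : forall (X Y : C) (f : Mor X Y),
    exists (Z : C) (g : Mor Y Z) (h : Mor Z (sh X)), dist f g h;
  TR1_iso : forall (X Y Z X' Y' Z' : C) (f : Mor X Y) (g : Mor Y Z)
      (h : Mor Z (sh X)) (f' : Mor X' Y') (g' : Mor Y' Z') (h' : Mor Z' (sh X'))
      (a : Mor X X') (b : Mor Y Y') (c : Mor Z Z'),
    dist f g h -> is_iso a -> is_iso b -> is_iso c ->
    mcomp b f = mcomp f' a -> mcomp c g = mcomp g' b -> mcomp (shm a) h = mcomp h' c ->
    dist f' g' h';
  TR2 : forall (X Y Z : C) (f : Mor X Y) (g : Mor Y Z) (h : Mor Z (sh X)),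
    dist f g h <-> dist g h (- shm f);
  TR3 : forall (X Y Z X' Y' Z' : C) (f : Mor X Y) (g : Mor Y Z)
      (h : Mor Z (sh X)) (f' : Mor X' Y') (g' : Mor Y' Z') (h' : Mor Z' (sh X'))
      (a : Mor X X') (b : Mor Y Y'),
    dist f g h -> dist f' g' h' -> mcomp b f = mcomp f' a ->
    exists c : Mor Z Z', mcomp c g = mcomp g' b /\ mcomp (shm a) h = mcomp h' c;
  TR4 : forall (X Y Z Z' X' Y' : C) (f : Mor X Y) (g : Mor Y Z)
      (u : Mor Y Z') (d : Mor Z' (sh X))
      (v : Mor Z X') (e : Mor X' (sh Y))
      (w : Mor Z Y') (k : Mor Y' (sh X)),
    dist f u d -> dist g v e -> dist (mcomp g f) w k ->
    exists (a : Mor Z' Y') (b : Mor Y' X'),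
      [/\ dist a b (mcomp (shm u) e), mcomp a u = mcomp w g, mcomp k a = d,
          mcomp b w = v & mcomp e b = mcomp (shm f) k] }.

Arguments sh {R C} T X : rename.
Arguments shm {R C} T {X Y} f : rename.
Arguments dist {R C} T {X Y Z} f g h : rename.

Section TriDefs.
Variables (R : comPzRingType) (C : RCat R) (T : Triangulated C).

(* An X-filtration of M (P = the class X).  Indexing shift: fM k = M_{k-1},
   so the k-th triangle (k = 0..n) is M_{k-1} -> M_k -> X_k -> M_{k-1}[1]. *)
Record filtration (P : C -> Prop) (M : C) := {
  flen : nat;
  fM : nat -> C;
  fX : nat -> C;
  fa : forall k, Mor (fM k) (fM k.+1);
  fb : forall k, Mor (fM k.+1) (fX k);
  fc : forall k, Mor (fX k) (sh T (fM k));
  f_dist : forall k, (k <= flen)%N -> dist T (fa k) (fb k) (fc k);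
  f_start : is_zero (fM 0);
  f_X0 : is_zero (fX 0);
  f_XP : forall k, (1 <= k <= flen)%N -> P (fX k);
  f_end : fM flen.+1 = M }.

Definition inF (P : C -> Prop) (M : C) : Prop := inhabited (filtration P M).

Record proj_system (t : nat) := {
  ps_le : rel 'I_t;
  ps_Theta : 'I_t -> C;
  ps_Q : 'I_t -> C;
  ps_Qsum : C;
  ps_K : 'I_t -> C;
  ps_a : forall i, Mor (ps_K i) (ps_Q i);
  ps_b : forall i, Mor (ps_Q i) (ps_Theta i);
  ps_c : forall i, Mor (ps_Theta i) (sh T (ps_K i));
  ps_refl : reflexive ps_le;
  ps_anti : antisymmetric ps_le;
  ps_trans : transitive ps_le;
  ps_total : total ps_le;
  ps_Theta_nz : forall i, ~ is_zero (ps_Theta i);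
  ps_Theta_dir : forall i j, ps_le i j && (i != j) ->
    forall f : Mor (ps_Theta j) (ps_Theta i), f = 0;
  ps_Q_indec : forall i, indecomposable (ps_Q i);
  ps_Qsum_dsum : is_dsum_of predT ps_Q ps_Qsum;
  ps_Q_shift1 : forall j (f : Mor ps_Qsum (sh T (ps_Theta j))), f = 0;
  ps_Q_shiftm1 : forall j (Y : C), iso (sh T Y) (ps_Theta j) ->
    forall f : Mor ps_Qsum Y, f = 0;
  ps_dist : forall i, dist T (ps_a i) (ps_b i) (ps_c i);
  ps_K_filt : forall i,
    inF (fun X => exists j, ps_le i j && (i != j) /\ iso X (ps_Theta j)) (ps_K i);
  ps_K_hom : forall i (f : Mor (sh T (ps_K i)) (ps_Theta i)), f = 0 }.

Variables (t : nat) (PS : proj_system t).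

Definition ThetaCls (X : C) : Prop := exists j, iso X (ps_Theta PS j).

(* i in Supp_Theta computed from the filtration F, i.e. [M:Theta(i)] <> 0 *)
Definition inSuppF (M : C) (F : filtration ThetaCls M) (i : 'I_t) : Prop :=
  exists k, (1 <= k <= flen F)%N /\ iso (fX F k) (ps_Theta PS i).

(* minF F o : o is the <=-minimum of the support (None = +infinity) *)
Definition minF (M : C) (F : filtration ThetaCls M) (o : option 'I_t) : Prop :=
  match o with
  | None => forall i, ~ inSuppF F i
  | Some i => inSuppF F i /\ forall j, inSuppF F j -> ps_le PS i j
  end.

Definition lt_opt (o1 o2 : option 'I_t) : bool :=
  match o1, o2 with
  | Some i, Some j => ps_le PS i j && (i != j)
  | Some _, None => true
  | None, _ => false
  end.

Definition ge_opt (o : option 'I_t) (j : 'I_t) : bool :=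
  match o with Some i => ps_le PS i j | None => false end.

Definition inPTheta (Z : C) : Prop :=
  forall L : C, inF ThetaCls L -> forall f : Mor Z (sh T L), f = 0.

Definition is_precover (X M : C) (eps : Mor X M) : Prop :=
  inPTheta X /\
  forall (Z : C) (f : Mor Z M), inPTheta Z -> exists g : Mor Z X, f = mcomp eps g.

End TriDefs.

(* Induct along the Theta-filtration of M, whose factors are Theta(j) with
   j >= i.  If M is an extension of Theta(j) by M' and N' -> Q' -> M' is
   already built, lift Q(j) -> Theta(j) to Q(j) -> M (Hom(Q(j), M'[1]) = 0)
   and take Q' + Q(j) -> M; the octahedral axiom makes its cocone N an
   extension of K(j) by N', so N is filtered by the Theta(l) with l > i.
   Then Hom(Q, F(Theta)[1]) = 0 and Hom(P(Theta), N[1]) = 0 give the precover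
   property, and min(N) > i because an object whose filtration has minimum k
   maps non-trivially to Theta(k), while Hom(Theta(l), Theta(k)) = 0 for
   l > i >= k. *)

From Pilot Require Import Defs.
From mathcomp Require Import all_boot all_order all_algebra.
Set Implicit Arguments. Unset Strict Implicit. Unset Printing Implicit Defensive.
Import GRing.Theory.
Local Open Scope ring_scope.

Section Preadditive.
Variables (R : comPzRingType) (C : RCat R).

Definition hom_zero (X Y : C) : Prop := forall u : Mor X Y, u = 0.

Lemma comp0m (X Y Z : C) (f : Mor X Y) : mcomp (0 : Mor Y Z) f = 0.
Proof. by apply: (addrI (mcomp (0 : Mor Y Z) f)); rewrite -compDl !addr0. Qed.

Lemma compm0 (X Y Z : C) (g : Mor Y Z) : mcomp g (0 : Mor X Y) = 0.
Proof. by apply: (addrI (mcomp g (0 : Mor X Y))); rewrite -compDr !addr0. Qed.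

Lemma compNl (X Y Z : C) (g : Mor Y Z) (f : Mor X Y) : mcomp (- g) f = - mcomp g f.
Proof. by apply: (addrI (mcomp g f)); rewrite -compDl !subrr comp0m. Qed.

Lemma compNr (X Y Z : C) (g : Mor Y Z) (f : Mor X Y) : mcomp g (- f) = - mcomp g f.
Proof. by apply: (addrI (mcomp g f)); rewrite -compDr !subrr compm0. Qed.

Lemma comp_suml (I : Type) (r : seq I) (P : pred I) (X Y Z : C)
    (F : I -> Mor Y Z) (f : Mor X Y) :
  mcomp (\sum_(k <- r | P k) F k) f = \sum_(k <- r | P k) mcomp (F k) f.
Proof. exact: (big_morph (mcomp^~ f) (fun a b => compDl a b f) (comp0m Z f)). Qed.

Lemma comp_sumr (I : Type) (r : seq I) (P : pred I) (X Y Z : C)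
    (g : Mor Y Z) (F : I -> Mor X Y) :
  mcomp g (\sum_(k <- r | P k) F k) = \sum_(k <- r | P k) mcomp g (F k).
Proof. exact: (big_morph (mcomp g) (compDr g) (compm0 X g)). Qed.

Lemma comp_idK (X Y W : C) (g : Mor Y X) (f : Mor X Y) (u : Mor W X) :
  mcomp g f = idm X -> mcomp g (mcomp f u) = u.
Proof. by move=> gf; rewrite Defs.compA gf comp1m. Qed.

Lemma comp_zeroK (X Y Z W : C) (g : Mor Y Z) (f : Mor X Y) (u : Mor W X) :
  mcomp g f = 0 -> mcomp g (mcomp f u) = 0.
Proof. by move=> gf; rewrite Defs.compA gf comp0m. Qed.

Lemma hom_zero_from (X Y : C) : is_zero X -> hom_zero X Y.
Proof. by move=> zX f; rewrite -(compm1 f) zX compm0. Qed.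

Lemma hom_zero_to (X Y : C) : is_zero Y -> hom_zero X Y.
Proof. by move=> zY f; rewrite -(comp1m f) zY comp0m. Qed.

Lemma is_iso_id (X : C) : is_iso (idm X).
Proof. by exists (idm X); rewrite comp1m. Qed.

Lemma iso_refl (X : C) : iso X X.
Proof. by exists (idm X); apply: is_iso_id. Qed.

Lemma iso_sym (X Y : C) : iso X Y -> iso Y X.
Proof. by case=> f [g [gf fg]]; exists g, f. Qed.

Lemma iso_hom_zero_l (X X' Y : C) : iso X X' -> hom_zero X' Y -> hom_zero X Y.
Proof.
by case=> f [g [gf _]] H u; rewrite -(compm1 u) -gf Defs.compA (H (mcomp u g)) comp0m.
Qed.

Lemma iso_hom_zero_r (X Y Y' : C) : iso Y Y' -> hom_zero X Y' -> hom_zero X Y.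
Proof.
by case=> f [g [gf _]] H u; rewrite -(comp1m u) -gf -Defs.compA (H (mcomp f u)) compm0.
Qed.

End Preadditive.

Section Triangulated.
Variables (R : comPzRingType) (C : RCat R) (T : Triangulated C).
Local Notation sh := (sh T).
Local Notation shm := (shm T).
Local Notation dist := (dist T).

Definition triangle (A X Y : C) : Prop :=
  exists (f : Mor A X) (g : Mor X Y) (h : Mor Y (sh A)), dist f g h.

Lemma shm0 (X Y : C) : shm (0 : Mor X Y) = 0.
Proof. by apply: (addrI (shm (0 : Mor X Y))); rewrite -shmD !addr0. Qed.

Lemma shmN (X Y : C) (f : Mor X Y) : shm (- f) = - shm f.
Proof. by apply: (addrI (shm f)); rewrite -shmD !subrr shm0. Qed.

Lemma shm_inj (X Y : C) : injective (fun f : Mor X Y => shm f).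
Proof. exact: bij_inj (shm_bij T X Y). Qed.

Lemma shm_surj (X Y : C) (F : Mor (sh X) (sh Y)) : exists f, F = shm f.
Proof. by case: (shm_bij T X Y) => g _ gK; exists (g F); rewrite gK. Qed.

Lemma is_zero_sh (X : C) : is_zero X -> is_zero (sh X).
Proof. by move=> zX; rewrite /is_zero -shm1 zX shm0. Qed.

Lemma is_iso_shm (X Y : C) (f : Mor X Y) : is_iso f -> is_iso (shm f).
Proof. by case=> g [gf fg]; exists (shm g); rewrite -!shmM gf fg !shm1. Qed.

Lemma iso_sh (X Y : C) : iso X Y -> iso (sh X) (sh Y).
Proof. by case=> f /is_iso_shm; exists (shm f). Qed.

Lemma dist_rot (X Y Z : C) (f : Mor X Y) (g : Mor Y Z) (h : Mor Z (sh X)) :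
  dist f g h -> dist g h (- shm f).
Proof. exact: (TR2 f g h).1. Qed.

Lemma dist_unrot (X Y Z : C) (f : Mor X Y) (g : Mor Y Z) (h : Mor Z (sh X)) :
  dist g h (- shm f) -> dist f g h.
Proof. exact: (TR2 f g h).2. Qed.

Lemma dist_zero_id (X Z : C) : is_zero Z ->
  dist (0 : Mor Z X) (idm X) (0 : Mor X (sh Z)).
Proof.
by move=> zZ; apply/dist_unrot; rewrite shm0 oppr0; exact/TR1_id/is_zero_sh.
Qed.

Lemma dist_comp (X Y Z : C) (f : Mor X Y) (g : Mor Y Z) (h : Mor Z (sh X)) :
  dist f g h -> mcomp g f = 0.
Proof.
move=> d; have [Z0 zZ0] := has_zero T.
have [c [<- _]] := TR3 (a := idm X) (b := f) (TR1_id T X zZ0) d erefl.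
exact: compm0.
Qed.

Lemma dist_weak_kernel (X Y Z W : C) (f : Mor X Y) (g : Mor Y Z)
    (h : Mor Z (sh X)) (u : Mor W Y) :
  dist f g h -> mcomp g u = 0 -> exists v, u = mcomp f v.
Proof.
move=> d gu; have [Z0 zZ0] := has_zero T.
have := TR3 (a := u) (b := 0) (dist_rot (TR1_id T W zZ0)) (dist_rot d).
rewrite comp0m gu => /(_ erefl) [c [_ e]].
have [v cv] := shm_surj c; subst c; exists v; move: e.
by rewrite shm1 compNr compm1 compNl -shmM => /oppr_inj /shm_inj.
Qed.

Lemma dist_weak_cokernel (X Y Z W : C) (f : Mor X Y) (g : Mor Y Z)
    (h : Mor Z (sh X)) (u : Mor Y W) :
  dist f g h -> mcomp u f = 0 -> exists v, u = mcomp v g.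
Proof.
move=> d uf; have [Z0 zZ0] := has_zero T.
have := TR3 (a := 0) (b := u) d (dist_zero_id W zZ0).
by rewrite comp0m uf => /(_ erefl) [c [e _]]; exists c; rewrite e comp1m.
Qed.

Lemma dist_extend (X Y Z W : C) (f : Mor X Y) (g : Mor Y Z) (h : Mor Z (sh X))
    (u : Mor X W) :
  dist f g h -> hom_zero Z (sh W) -> exists v, u = mcomp v f.
Proof.
move=> d HZ.
have [v' ev] := dist_weak_cokernel (u := shm u) (dist_rot (dist_rot d)) (HZ _).
have [v0 v0E] := shm_surj v'; subst v'; exists (- v0).
by apply: shm_inj; rewrite ev compNr -shmM -shmN compNl.
Qed.

Lemma dist_zero_mid (X Y Z : C) (f : Mor X Y) (g : Mor Y Z) (h : Mor Z (sh X)) :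
  dist f g h -> is_zero X -> is_zero Z -> is_zero Y.
Proof.
move=> d zX zZ; rewrite /is_zero.
have [v ->] := dist_weak_cokernel (u := idm Y) d (hom_zero_from zX _).
by rewrite (hom_zero_from zZ v) comp0m.
Qed.

Lemma dist_is_iso_of_zero (X Y Z : C) (f : Mor X Y) (g : Mor Y Z)
    (h : Mor Z (sh X)) :
  dist f g h -> is_zero Z -> is_iso f.
Proof.
move=> d zZ; have [v fv] := dist_weak_kernel (u := idm Y) d (hom_zero_to zZ _).
have f_mono W (u : Mor W X) : mcomp f u = 0 -> u = 0.
  move=> fu; apply: shm_inj; rewrite shm0.
  have [w ->] := dist_weak_kernel (u := shm u) (dist_rot (dist_rot d))
    ltac:(by rewrite compNl -shmM fu shm0 oppr0).
  by rewrite (hom_zero_from zZ h) comp0m.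
exists v; split=> //; apply/eqP; rewrite -subr_eq0; apply/eqP/f_mono.
by rewrite compDr compNr Defs.compA -fv comp1m compm1 subrr.
Qed.

Lemma dist_of_biprod (A B S : C) (i1 : Mor A S) (i2 : Mor B S) (p1 : Mor S A)
    (p2 : Mor S B) :
  is_biprod i1 i2 p1 p2 -> dist i1 p2 (0 : Mor B (sh A)).
Proof.
case=> p1i1 p2i2 p1i2 p2i1 sum1.
have [Z [g [h d]]] := TR1_ext T i1.
have h0 : h = 0.
  have shi1h : mcomp (shm i1) h = 0.
    by apply/oppr_inj; rewrite oppr0 -compNl (dist_comp (dist_rot (dist_rot d))).
  by rewrite -[h]comp1m -shm1 -p1i1 shmM -Defs.compA shi1h compm0.
have [psi psiE] := dist_weak_cokernel (u := p2) d p2i1.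
have gi1 : mcomp g i1 = 0 by exact: dist_comp d.
apply: (TR1_iso d (is_iso_id A) (is_iso_id S) (c := psi)).
- exists (mcomp g i2); split; last by rewrite Defs.compA -psiE p2i2.
  apply/eqP; rewrite -subr_eq0; apply/eqP.
  have i2p2 : mcomp i2 p2 = idm S - mcomp i1 p1 by rewrite -sum1 addrAC subrr add0r.
  have [v ->] := dist_weak_cokernel (u := mcomp (mcomp g i2) psi - idm Z) (dist_rot d)
    ltac:(by rewrite compDl compNl -!Defs.compA -psiE comp1m i2p2 compDr compNr compm1
      Defs.compA gi1 comp0m subr0 subrr).
  by rewrite h0 compm0.
- by rewrite comp1m compm1.
- by rewrite compm1 psiE.
- by rewrite shm1 comp1m h0 comp0m.
Qed.

Lemma dist_cocone (X Y : C) (f : Mor X Y) :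
  exists (W : C) (u : Mor W X) (h : Mor Y (sh W)), dist u f h.
Proof.
have [Z [g [h d]]] := TR1_ext T f.
have [W [phi [psi [psiphi phipsi]]]] := sh_esurj T Z.
have d' : dist f (mcomp psi g) (mcomp h phi).
  apply: (TR1_iso (c := psi) d (is_iso_id X) (is_iso_id Y)).
  - by exists phi.
  - by rewrite compm1 comp1m.
  - by rewrite compm1.
  - by rewrite shm1 comp1m -Defs.compA phipsi compm1.
have [h0 h0E] := shm_surj (mcomp h phi); rewrite h0E in d'.
exists W, (- h0), (mcomp psi g); apply: dist_unrot; by rewrite shmN opprK.
Qed.

Lemma triangle_iso (A X Y A' X' Y' : C) :
  triangle A X Y -> iso A A' -> iso X X' -> iso Y Y' -> triangle A' X' Y'.
Proof.
move=> [f [g [h d]]] [a [a' [a'a aa']]] [b [b' [b'b bb']]] [c [c' [c'c cc']]].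
exists (mcomp b (mcomp f a')), (mcomp c (mcomp g b')), (mcomp (shm a) (mcomp h c')).
apply: (TR1_iso (a := a) (b := b) (c := c) d);
  [by exists a'; split | by exists b'; split | by exists c'; split | ..];
  by rewrite -!Defs.compA ?a'a ?b'b ?c'c !compm1.
Qed.

Lemma triangle_rot (A X Y : C) : triangle A X Y -> triangle X Y (sh A).
Proof. by case=> f [g [h /dist_rot d]]; exists g, h, (- shm f). Qed.

Lemma triangle_unrot (A X Y : C) : triangle X Y (sh A) -> triangle A X Y.
Proof.
case=> g [h [k d]]; have [f fE] := shm_surj k; subst k.
by exists (- f), g, h; apply: dist_unrot; rewrite shmN opprK.
Qed.

Lemma triangle_desuspend (A X Y : C) :
  triangle (sh A) (sh X) (sh Y) -> triangle A X Y.
Proof. by move=> /triangle_unrot /triangle_unrot /triangle_unrot. Qed.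

End Triangulated.

Section Filtered.
Variables (R : comPzRingType) (C : RCat R) (T : Triangulated C).
Local Notation sh := (sh T).
Local Notation dist := (dist T).
Local Notation triangle := (triangle T).

Inductive filtered (P : C -> Prop) : C -> Prop :=
  | filtered_zero X : is_zero X -> filtered P X
  | filtered_ext A X Y : triangle A X Y -> filtered P A -> P Y -> filtered P X.

Lemma filtered_mono (P P' : C -> Prop) (M : C) :
  (forall Y, P Y -> P' Y) -> filtered P M -> filtered P' M.
Proof.
move=> PP'; elim=> [X zX | A X Y tr _ FA PY]; first exact: filtered_zero.
exact: filtered_ext tr FA (PP' _ PY).
Qed.

Lemma filtered_iso (P : C -> Prop) (A B : C) : filtered P A -> iso A B -> filtered P B.
Proof.
case=> [X zX | A' X Y tr FA' PY] AB.
  case: AB => [f [g [_ fg]]]; apply: filtered_zero.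
  by rewrite /is_zero -fg (hom_zero_from zX f) comp0m.
exact: filtered_ext (triangle_iso tr (iso_refl A') AB (iso_refl Y)) FA' PY.
Qed.

Lemma filtered_ext_closed (P : C -> Prop) (A B Z : C) :
  triangle A B Z -> filtered P A -> filtered P Z -> filtered P B.
Proof.
move=> tr FA FZ; elim: FZ B tr => [Z0 zZ | Z' Z0 Y [r [s [t dr]]] _ IH PY] B [f [g [h d]]].
  by apply: (filtered_iso FA); exists f; exact: dist_is_iso_of_zero d zZ.
(* B is an extension of Y by the cocone B' of [s g], and B' is one of Z' by A *)
have [B' [x [y dB']]] := dist_cocone T (mcomp s g).
have [a [b [dab _ _ _ _]]] := TR4 (dist_rot d) (dist_rot dr) (dist_rot dB').
apply: (filtered_ext (A := B')) PY; first by exists x, (mcomp s g), y.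
by apply/IH/triangle_desuspend; exists a, b, (mcomp (shm T h) (- shm T r)).
Qed.

Lemma triangle_sh (A X Y : C) : triangle A X Y -> triangle (sh A) (sh X) (sh Y).
Proof. by move=> /triangle_rot /triangle_rot /triangle_rot. Qed.

Lemma hom_zero_to_ext (A X Y Z : C) :
  triangle A X Y -> hom_zero Z A -> hom_zero Z Y -> hom_zero Z X.
Proof.
move=> [f [g [h d]]] HA HY u.
by have [v ->] := dist_weak_kernel d (HY (mcomp g u)); rewrite (HA v) compm0.
Qed.

Lemma hom_zero_from_ext (A X Y W : C) :
  triangle A X Y -> hom_zero A W -> hom_zero Y W -> hom_zero X W.
Proof.
move=> [f [g [h d]]] HA HY u.
by have [v ->] := dist_weak_cokernel d (HA (mcomp u f)); rewrite (HY v) comp0m.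
Qed.

Lemma hom_zero_to_sh_filtered (P : C -> Prop) (Z M : C) :
  (forall Y, P Y -> hom_zero Z (sh Y)) -> filtered P M -> hom_zero Z (sh M).
Proof.
move=> HP; elim=> [X zX | A X Y tr _ HA PY].
  exact/hom_zero_to/is_zero_sh.
exact: hom_zero_to_ext (triangle_sh tr) HA (HP Y PY).
Qed.

Lemma hom_zero_from_filtered (P : C -> Prop) (M W : C) :
  (forall Y, P Y -> hom_zero Y W) -> filtered P M -> hom_zero M W.
Proof.
move=> HP; elim=> [X zX | A X Y tr _ HA PY]; first exact: hom_zero_from.
exact: hom_zero_from_ext tr HA (HP Y PY).
Qed.

Lemma filtered_pred0 (P : C -> Prop) (M : C) :
  (forall Y, ~ P Y) -> filtered P M -> is_zero M.
Proof.
move=> P0; elim=> [X zX | A X Y _ _ _ PY] //.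
by case: (P0 Y PY).
Qed.

Lemma filtration_prefix_filtered (P Q : C -> Prop) (M : C) (F : filtration T P M) :
  (forall k, (1 <= k <= flen F)%N -> Q (fX F k)) ->
  forall k, (k <= (flen F).+1)%N -> filtered Q (fM F k).
Proof.
move=> HQ; elim=> [|k IH] Hk; first exact/filtered_zero/f_start.
have d := f_dist Hk; case: k IH Hk d => [|k] IH Hk d.
  exact/filtered_zero/(dist_zero_mid d (f_start F) (f_X0 F)).
by apply: filtered_ext (IH (ltnW Hk)) (HQ _ _); [exists (fa F k.+1), (fb F k.+1), (fc F k.+1) |].
Qed.

Lemma inF_filtered (P : C -> Prop) (M : C) : inF T P M -> filtered P M.
Proof.
case=> F; rewrite -(f_end F).
exact: filtration_prefix_filtered (@f_XP _ _ _ _ _ F) _ (leqnn _).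
Qed.

Lemma filtration_extend_neq0 (P : C -> Prop) (M W : C) (F : filtration T P M) m
    (u : Mor (fM F m) W) :
  u <> 0 -> (m <= (flen F).+1)%N ->
  (forall k, (m <= k <= flen F)%N -> hom_zero (fX F k) (sh W)) ->
  exists v : Mor M W, v <> 0.
Proof.
move=> nu mn HX.
suff extend k : (m + k <= (flen F).+1)%N -> exists v : Mor (fM F (m + k)) W, v <> 0.
  by rewrite -(f_end F) -(subnKC mn); apply: extend; rewrite subnKC.
elim: k => [|k IH] mk; first by rewrite addn0; exists u.
rewrite addnS in mk *; have [v nv] := IH (ltnW mk).
have HXk : hom_zero (fX F (m + k)) (sh W) by apply: HX; rewrite leq_addr -ltnS.
have [w vE] := dist_extend v (f_dist mk) HXk.
by exists w => w0; apply: nv; rewrite vE w0 comp0m.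
Qed.

Definition cast_mor (X X' Y Y' : C) (eX : X = X') (eY : Y = Y') (f : Mor X Y) :
  Mor X' Y' :=
  match eX in _ = X0 return Mor X0 Y' with
  | erefl => match eY in _ = Y0 return Mor X Y0 with erefl => f end end.

Lemma dist_cast (X X' Y Y' Z Z' : C) (eX : X = X') (eY : Y = Y') (eZ : Z = Z')
    (f : Mor X Y) (g : Mor Y Z) (h : Mor Z (sh X)) :
  dist f g h ->
  dist (cast_mor eX eY f) (cast_mor eY eZ g) (cast_mor eZ (f_equal sh eX) h).
Proof. by case: X' / eX; case: Y' / eY; case: Z' / eZ. Qed.

(* The filtration of [A] followed by the triangle [A -> X -> Y]; the casts are
   needed because [fM FA (flen FA).+1] is only propositionally equal to [A]. *)
Section Append.
Variables (P : C -> Prop) (A X Y : C) (FA : filtration T P A).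
Variables (f : Mor A X) (g : Mor X Y) (h : Mor Y (sh A)).
Hypotheses (d : dist f g h) (PY : P Y).
Let n := flen FA.

Let app_M k := if k == n.+2 then X else fM FA k.
Let app_X k := if k == n.+1 then Y else fX FA k.

Let app_M_old k : (k <= n.+1)%N -> fM FA k = app_M k.
Proof. by move=> kn; rewrite /app_M ifF //; apply: contraTF kn => /eqP ->; rewrite ltnn. Qed.

Let app_X_old k : (k <= n)%N -> fX FA k = app_X k.
Proof. by move=> kn; rewrite /app_X ifF //; apply: contraTF kn => /eqP ->; rewrite ltnn. Qed.

Let app_M_last k : k = n.+1 -> A = app_M k.
Proof. by move=> ->; rewrite -(f_end FA); apply: app_M_old. Qed.

Let app_M_new k : k = n.+1 -> X = app_M k.+1.
Proof. by move=> ->; rewrite /app_M eqxx. Qed.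

Let app_X_new k : k = n.+1 -> Y = app_X k.
Proof. by move=> ->; rewrite /app_X eqxx. Qed.

Let app_fa k : Mor (app_M k) (app_M k.+1) :=
  match leqP k n, eqVneq k n.+1 with
  | LeqNotGtn kn, _ => cast_mor (app_M_old (leqW kn)) (app_M_old (k := k.+1) kn) (fa FA k)
  | GtnNotLeq _, EqNotNeq kE => cast_mor (app_M_last kE) (app_M_new kE) f
  | GtnNotLeq _, NeqNotEq _ => 0
  end.

Let app_fb k : Mor (app_M k.+1) (app_X k) :=
  match leqP k n, eqVneq k n.+1 with
  | LeqNotGtn kn, _ => cast_mor (app_M_old (k := k.+1) kn) (app_X_old kn) (fb FA k)
  | GtnNotLeq _, EqNotNeq kE => cast_mor (app_M_new kE) (app_X_new kE) g
  | GtnNotLeq _, NeqNotEq _ => 0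
  end.

Let app_fc k : Mor (app_X k) (sh (app_M k)) :=
  match leqP k n, eqVneq k n.+1 with
  | LeqNotGtn kn, _ => cast_mor (app_X_old kn) (f_equal sh (app_M_old (leqW kn))) (fc FA k)
  | GtnNotLeq _, EqNotNeq kE => cast_mor (app_X_new kE) (f_equal sh (app_M_last kE)) h
  | GtnNotLeq _, NeqNotEq _ => 0
  end.

Lemma filtration_append : inF T P X.
Proof.
constructor; apply: (@Build_filtration _ _ T P X n.+1 app_M app_X app_fa app_fb app_fc).
- move=> k kn; rewrite /app_fa /app_fb /app_fc.
  case: leqP => [kn'|nk]; first exact/dist_cast/f_dist.
  by case: eqVneq => [kE|]; [exact: dist_cast | rewrite eqn_leq kn nk].
- exact: f_start.
- exact: f_X0.
- move=> k /andP [k1 kn]; rewrite /app_X; case: eqP => // kE.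
  by apply: f_XP; rewrite k1 -ltnS ltn_neqAle kn andbT; apply/eqP.
- by rewrite /app_M eqxx.
Qed.

End Append.

Lemma filtered_inF (P : C -> Prop) (M : C) : filtered P M -> inF T P M.
Proof.
elim=> [X zX | A X Y [f [g [h d]]] _ [FA] PY].
  constructor; apply: (@Build_filtration _ _ T P X 0 (fun _ => X) (fun _ => X)
    (fun _ => idm X) (fun _ => 0) (fun _ => 0)) => //.
  - by move=> k _; exact: TR1_id.
  - by case=> [|[]].
exact: (filtration_append FA d PY).
Qed.

End Filtered.

Section Additive.
Variables (R : comPzRingType) (C : RCat R) (T : Triangulated C).

Lemma dsum_proj_sum (I : finType) (P Q : pred I) (A : I -> C) (S W : C)
    (inj : forall k, Mor (A k) S) (proj : forall k, Mor S (A k))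
    (F : forall k, Mor W (A k)) l :
  is_dsum P inj proj -> (forall m, Q m -> P m) -> Q l ->
  \sum_(m | Q m) mcomp (proj l) (mcomp (inj m) (F m)) = F l.
Proof.
case=> pi_id pi_0 _ QP Ql; rewrite (bigD1 l) //= comp_idK ?pi_id ?QP //.
rewrite big1 ?addr0 // => m /andP [Qm ml].
by rewrite comp_zeroK // pi_0 ?QP // eq_sym.
Qed.

Lemma is_dsum_biprod (I : finType) (P : pred I) (A : I -> C) (k0 : I)
    (S' S : C) (inj' : forall k, Mor (A k) S') (proj' : forall k, Mor S' (A k))
    (i1 : Mor (A k0) S) (i2 : Mor S' S) (p1 : Mor S (A k0)) (p2 : Mor S S') :
  P k0 -> is_dsum [pred k | (k != k0) && P k] inj' proj' ->
  is_biprod i1 i2 p1 p2 -> is_dsum_of P A S.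
Proof.
move=> Pk0 [pi_id' pi_0' sum1'] [p1i1 p2i2 p1i2 p2i1 sum1].
exists (fun k => match k =P k0 with
  | ReflectT e => eq_rect_r (fun x => Mor (A x) S) i1 e
  | ReflectF _ => mcomp i2 (inj' k) end).
exists (fun k => match k =P k0 with
  | ReflectT e => eq_rect_r (fun x => Mor S (A x)) p1 e
  | ReflectF _ => mcomp (proj' k) p2 end).
have P'E k : k != k0 -> P k -> [pred k | (k != k0) && P k] k by move=> /= -> ->.
split.
- move=> k Pk; case: (k =P k0) => [e|/eqP ne]; first by subst k.
  by rewrite -Defs.compA comp_idK // pi_id' // P'E.
- move=> k l Pk Pl kl; case: (k =P k0) => [e|/eqP ne]; case: (l =P k0) => [e'|/eqP ne'].
  + by subst k l; rewrite eqxx in kl.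
  + by subst k; rewrite /= comp_zeroK.
  + by subst l; rewrite /= -Defs.compA p2i1 compm0.
  + by rewrite -Defs.compA comp_idK // pi_0' // P'E.
- rewrite (bigD1 k0) //=; case: (k0 =P k0) => [e|] //.
  rewrite (eq_irrelevance e erefl) /= -sum1; congr (_ + _).
  rewrite (eq_bigr (fun k => mcomp i2 (mcomp (mcomp (inj' k) (proj' k)) p2))).
    by rewrite -comp_sumr -comp_suml (eq_bigl _ _ (fun k => andbC _ _)) sum1' comp1m.
  move=> k /andP [Pk nk]; case: (k =P k0) => [e'|_]; first by rewrite e' eqxx in nk.
  by rewrite !Defs.compA.
Qed.

Lemma is_dsum_exists (I : finType) (P : pred I) (A : I -> C) :
  exists S inj proj, @is_dsum R C I P A S inj proj.
Proof.
have [n] := ubnP #|P|; elim: n P => // n IH P Pn.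
case: (pickP P) => [k0 Pk0 | P0]; last first.
  have [Z zZ] := has_zero T.
  exists Z, (fun=> 0), (fun=> 0); split=> [k | k l |]; rewrite ?P0 //.
  by rewrite big_pred0.
have [|S' [inj' [proj' dS']]] := IH [pred k | (k != k0) && P k].
  by move: Pn; rewrite (cardD1 k0) [k0 \in P]unfold_in Pk0.
have [S [i1 [i2 [p1 [p2 bS]]]]] := has_biprod T (A k0) S'.
by exists S; exact: is_dsum_biprod Pk0 dS' bS.
Qed.

Lemma is_biprod_dsum (I : finType) (P : pred I) (A : I -> C) (j : I)
    (S S' : C) (inj : forall k, Mor (A k) S) (proj : forall k, Mor S (A k))
    (inj' : forall k, Mor (A k) S') (proj' : forall k, Mor S' (A k)) :
  let P' := [pred k | (k != j) && P k] in
  is_dsum P inj proj -> P j -> is_dsum P' inj' proj' ->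
  is_biprod (inj j) (\sum_(m | P' m) mcomp (inj m) (proj' m))
            (proj j) (\sum_(m | P' m) mcomp (inj' m) (proj m)).
Proof.
move=> P' dS Pj dS'; have [pi_id pi_0 sum1] := dS; have [_ _ sum1'] := dS'.
have P'P m : P' m -> P m by case/andP.
split.
- exact: pi_id.
- rewrite comp_suml -[RHS]sum1'; apply: eq_bigr => l P'l.
  by rewrite -Defs.compA comp_sumr (dsum_proj_sum proj' dS P'P P'l).
- by rewrite comp_sumr big1 // => m /andP [mj Pm]; rewrite comp_zeroK // pi_0 // eq_sym.
- by rewrite comp_suml big1 // => m /andP [mj Pm]; rewrite -Defs.compA pi_0 ?compm0.
- rewrite comp_suml -sum1 [RHS](bigD1 j) //=; congr (_ + _).
  rewrite [RHS](eq_bigl P') => [|m]; last by rewrite /= andbC.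
  apply: eq_bigr => m P'm; rewrite -Defs.compA comp_sumr.
  by rewrite (dsum_proj_sum proj dS' (fun _ => id) P'm).
Qed.

Lemma is_dsum_of1 (X : C) : is_dsum_of (I := 'I_1) predT (fun=> X) X.
Proof.
exists (fun=> idm X), (fun=> idm X); split=> [k _ | k l _ _ |].
- by rewrite comp1m.
- by rewrite !ord1 eqxx.
- by rewrite big_ord1 comp1m.
Qed.

Lemma in_add_dsum (I : finType) (P : pred I) (A : I -> C) (S : C)
    (inj : forall k, Mor (A k) S) (proj : forall k, Mor S (A k)) (j : I) :
  is_dsum P inj proj -> P j -> in_add S (A j).
Proof.
move=> dS Pj; have [S' [inj' [proj' dS']]] := is_dsum_exists [pred k | (k != j) && P k] A.
exists 1%N, S; split; first exact: is_dsum_of1.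
by exists S'; do 4!eexists; exact: is_biprod_dsum dS Pj dS'.
Qed.

Lemma in_add_zero (X Z : C) : is_zero Z -> in_add X Z.
Proof.
move=> zZ; exists 0%N, Z; split.
  by exists (fun=> 0), (fun=> 0); split=> [[] | [] |] //; rewrite big_ord0 zZ.
by exists Z, (idm Z), (idm Z), (idm Z), (idm Z); rewrite zZ; split; rewrite ?comp0m ?addr0.
Qed.

Lemma is_dsum_of_biprod (X SA SB S : C) (n m : nat)
    (s1 : Mor SA S) (s2 : Mor SB S) (t1 : Mor S SA) (t2 : Mor S SB) :
  is_biprod s1 s2 t1 t2 ->
  is_dsum_of (I := 'I_n) predT (fun=> X) SA ->
  is_dsum_of (I := 'I_m) predT (fun=> X) SB ->
  is_dsum_of (I := 'I_(n + m)) predT (fun=> X) S.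
Proof.
case=> t1s1 t2s2 t1s2 t2s1 sum1 [ia [pa [ea1 ea2 ea3]]] [ib [pb [eb1 eb2 eb3]]].
exists (fun k => match split k with inl k1 => mcomp s1 (ia k1)
                                  | inr k2 => mcomp s2 (ib k2) end).
exists (fun k => match split k with inl k1 => mcomp (pa k1) t1
                                  | inr k2 => mcomp (pb k2) t2 end).
split.
- move=> k _; case: split_ordP => [k1|k2] _; rewrite -Defs.compA.
  + by rewrite (comp_idK _ t1s1) ea1.
  + by rewrite (comp_idK _ t2s2) eb1.
- move=> k l _ _ kl.
  case: split_ordP => [k1|k2] kE; case: split_ordP => [l1|l2] lE;
    rewrite -Defs.compA ?(comp_idK _ t1s1) ?(comp_idK _ t2s2)
      ?(comp_zeroK _ t1s2) ?(comp_zeroK _ t2s1) ?compm0 //.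
  + by apply: ea2 => //; apply: contraNneq kl => e; rewrite kE lE e.
  + by apply: eb2 => //; apply: contraNneq kl => e; rewrite kE lE e.
- rewrite big_split_ord /=.
  rewrite (eq_bigr (fun k => mcomp s1 (mcomp (mcomp (ia k) (pa k)) t1)));
    last by move=> k _; rewrite (unsplitK (inl k)) !Defs.compA.
  rewrite [X in _ + X](eq_bigr (fun k => mcomp s2 (mcomp (mcomp (ib k) (pb k)) t2)));
    last by move=> k _; rewrite (unsplitK (inr k)) !Defs.compA.
  by rewrite -!comp_sumr -!comp_suml ea3 eb3 !comp1m.
Qed.

(* (A + YA) + (B + YB) = (A + B) + (YA + YB) *)
Lemma is_biprod_interchange (A B YA YB SA SB Z Y S : C)
    (a1 : Mor A SA) (a2 : Mor YA SA) (b1 : Mor SA A) (b2 : Mor SA YA)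
    (c1 : Mor B SB) (c2 : Mor YB SB) (d1 : Mor SB B) (d2 : Mor SB YB)
    (x1 : Mor A Z) (x2 : Mor B Z) (y1 : Mor Z A) (y2 : Mor Z B)
    (u1 : Mor YA Y) (u2 : Mor YB Y) (v1 : Mor Y YA) (v2 : Mor Y YB)
    (s1 : Mor SA S) (s2 : Mor SB S) (t1 : Mor S SA) (t2 : Mor S SB) :
  is_biprod a1 a2 b1 b2 -> is_biprod c1 c2 d1 d2 -> is_biprod x1 x2 y1 y2 ->
  is_biprod u1 u2 v1 v2 -> is_biprod s1 s2 t1 t2 ->
  is_biprod (mcomp s1 (mcomp a1 y1) + mcomp s2 (mcomp c1 y2))
            (mcomp s1 (mcomp a2 v1) + mcomp s2 (mcomp c2 v2))
            (mcomp x1 (mcomp b1 t1) + mcomp x2 (mcomp d1 t2))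
            (mcomp u1 (mcomp b2 t1) + mcomp u2 (mcomp d2 t2)).
Proof.
case=> A11 A22 A12 A21 Aid; case=> B11 B22 B12 B21 Bid.
case=> X11 X22 X12 X21 Xid; case=> U11 U22 U12 U21 Uid.
case=> S11 S22 S12 S21 Sid.
split; rewrite ?compDl ?compDr -?Defs.compA;
rewrite ?(comp_idK _ A11, comp_idK _ A22, comp_zeroK _ A12, comp_zeroK _ A21,
  comp_idK _ B11, comp_idK _ B22, comp_zeroK _ B12, comp_zeroK _ B21,
  comp_idK _ X11, comp_idK _ X22, comp_zeroK _ X12, comp_zeroK _ X21,
  comp_idK _ U11, comp_idK _ U22, comp_zeroK _ U12, comp_zeroK _ U21,
  comp_idK _ S11, comp_idK _ S22, comp_zeroK _ S12, comp_zeroK _ S21);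
rewrite ?(A11, A22, A12, A21, B11, B22, B12, B21, X11, X22, X12, X21,
  U11, U22, U12, U21, S11, S22, S12, S21);
rewrite ?compm0 ?comp0m ?addr0 ?add0r ?compm1 ?comp1m //.
rewrite -Sid addrACA; congr (_ + _).
  by rewrite -compDr !Defs.compA -compDl Aid comp1m.
by rewrite -compDr !Defs.compA -compDl Bid comp1m.
Qed.

Lemma in_add_biprod (X A B Z : C) (x1 : Mor A Z) (x2 : Mor B Z)
    (y1 : Mor Z A) (y2 : Mor Z B) :
  is_biprod x1 x2 y1 y2 -> in_add X A -> in_add X B -> in_add X Z.
Proof.
move=> bZ [n [SA [dA [YA [a1 [a2 [b1 [b2 bA]]]]]]]]
  [m [SB [dB [YB [c1 [c2 [d1 [d2 bB]]]]]]]].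
have [Y [u1 [u2 [v1 [v2 bY]]]]] := has_biprod T YA YB.
have [S [s1 [s2 [t1 [t2 bS]]]]] := has_biprod T SA SB.
exists (n + m)%N, S; split; first exact: is_dsum_of_biprod bS dA dB.
by exists Y; do 4!eexists; exact: is_biprod_interchange bA bB bZ bY bS.
Qed.

Lemma hom_zero_dsum (I : finType) (P : pred I) (A : I -> C) (S W : C)
    (inj : forall k, Mor (A k) S) (proj : forall k, Mor S (A k)) :
  is_dsum P inj proj -> (forall k, P k -> hom_zero (A k) W) -> hom_zero S W.
Proof.
case=> _ _ sum1 HA u; rewrite -(compm1 u) -sum1 comp_sumr big1 // => k Pk.
by rewrite Defs.compA (HA k Pk (mcomp u (inj k))) comp0m.
Qed.

Lemma hom_zero_in_add (X Y W : C) : in_add X Y -> hom_zero X W -> hom_zero Y W.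
Proof.
case=> n [S [[inj [proj dS]] [Y' [i1 [i2 [p1 [p2 [p1i1 _ _ _ _]]]]]]]] HX u.
have HS := hom_zero_dsum dS (fun k _ => HX).
by rewrite -(compm1 u) -p1i1 Defs.compA (HS (mcomp u p1)) comp0m.
Qed.

End Additive.

Section Approximation.
Variables (R : comPzRingType) (C : RCat R) (T : Triangulated C).
Local Notation sh := (sh T).
Local Notation shm := (shm T).
Local Notation dist := (dist T).
Local Notation triangle := (triangle T).
Local Notation filtered := (filtered T).

Lemma cocone_biprod_triangle (Nk Qk Mk Mk' Y K Q Q' N' : C)
    (ak : Mor Nk Qk) (ek : Mor Qk Mk) (ck : Mor Mk (sh Nk))
    (m : Mor Mk Mk') (p : Mor Mk' Y) (dl : Mor Y (sh Mk))
    (al : Mor K Q) (be : Mor Q Y) (ga : Mor Y (sh K))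
    (i1 : Mor Qk Q') (i2 : Mor Q Q') (p1 : Mor Q' Qk) (p2 : Mor Q' Q)
    (e : Mor Q' Mk') (a : Mor N' Q') (c : Mor Mk' (sh N')) :
  dist ak ek ck -> dist m p dl -> dist al be ga -> is_biprod i1 i2 p1 p2 ->
  dist a e c -> mcomp e i1 = mcomp m ek -> mcomp p (mcomp e i2) = be ->
  triangle Nk N' K.
Proof.
move=> dE dT dP bQ dN ei1 pei2; have [_ p2i2 _ _ _] := bQ.
have [W [w [kW dW]]] := TR1_ext T (mcomp m ek).
have [A1 [B1 [dA1 _ _ B1w _]]] := TR4 (dist_rot dE) dT dW.
have dW' : dist (mcomp e i1) w kW by rewrite ei1.
have [A3 [B3 [dA3 A3p2 _ _ _]]] := TR4 (dist_of_biprod T bQ) (dist_rot dN) dW'.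
have B1A3 : mcomp B1 A3 = be.
  by rewrite -[A3]compm1 -p2i2 (Defs.compA A3) A3p2 -Defs.compA (Defs.compA B1) B1w.
have dP' : dist (mcomp B1 A3) ga (- shm al) by rewrite B1A3; exact: dist_rot.
(* the octahedron on Q -> W -> Y has vertices N'[1], K[1] and Nk[2] *)
have [A2 [B2 [dA2 _ _ _ _]]] := TR4 dA3 (dist_rot dA1) dP'.
by apply/triangle_unrot/triangle_desuspend; exists A2, B2, (mcomp (shm B3) (- shm A1)).
Qed.

Lemma approximation_step (P : C -> Prop) (X Nk Qk Mk Mk' Y K Q : C) :
  triangle Nk Qk Mk -> triangle Mk Mk' Y -> triangle K Q Y -> hom_zero Q (sh Mk) ->
  filtered P Nk -> filtered P K -> in_add X Qk -> in_add X Q ->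
  exists N' Q', [/\ triangle N' Q' Mk', filtered P N' & in_add X Q'].
Proof.
move=> [ak [ek [ck dE]]] [m [p [dl dT]]] [al [be [ga dP]]] HQ FN FK AQk AQ.
have [q beE] := dist_weak_kernel (u := be) (dist_rot dT) (HQ (mcomp dl be)).
have [Q' [i1 [i2 [p1 [p2 bQ]]]]] := has_biprod T Qk Q.
have [p1i1 p2i2 p1i2 p2i1 _] := bQ.
pose e := mcomp (mcomp m ek) p1 + mcomp q p2.
have ei1 : mcomp e i1 = mcomp m ek.
  by rewrite compDl -!Defs.compA p1i1 p2i1 compm1 compm0 addr0.
have ei2 : mcomp e i2 = q.
  by rewrite compDl -!Defs.compA p1i2 p2i2 compm1 !compm0 add0r.
have [N' [a [c dN]]] := dist_cocone T e.
exists N', Q'; split; first by exists a, e, c.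
  apply: filtered_ext_closed FN FK.
  by apply: cocone_biprod_triangle dE dT dP bQ dN ei1 _; rewrite ei2 beE.
exact: (in_add_biprod T bQ AQk AQ).
Qed.

End Approximation.

Section ProjectiveSystem.
Variables (R : comPzRingType) (C : RCat R) (T : Triangulated C).
Variables (t : nat) (PS : proj_system T t).
Local Notation sh := (sh T).
Local Notation triangle := (triangle T).
Local Notation filtered := (filtered T).
Local Notation Th := (ps_Theta PS).
Local Notation Q := (ps_Q PS).
Local Notation le := (ps_le PS).

Definition Theta_ge (o : option 'I_t) (Y : C) : Prop :=
  exists2 l, ge_opt PS o l & iso Y (Th l).

Definition Theta_gt (o : option 'I_t) (Y : C) : Prop :=
  exists2 l, lt_opt PS o (Some l) & iso Y (Th l).

Lemma ps_le_lt_trans (a b c : 'I_t) :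
  le a b -> le b c && (b != c) -> le a c && (a != c).
Proof.
move=> ab /andP [bc bc']; rewrite (ps_trans ab bc) /=.
apply: contraNneq bc' => ac; subst c; by apply/eqP/(ps_anti (p := PS)); rewrite bc ab.
Qed.

Lemma hom_zero_Q_sh_Theta l j : hom_zero (Q l) (sh (Th j)).
Proof.
have [inj [proj [pi_id _ _]]] := ps_Qsum_dsum PS.
move=> u; rewrite -(compm1 u) -(pi_id l) //.
by rewrite Defs.compA (ps_Q_shift1 (mcomp u (proj l))) comp0m.
Qed.

Lemma hom_zero_Q_sh_filtered l (M : C) :
  filtered (ThetaCls PS) M -> hom_zero (Q l) (sh M).
Proof.
move=> FM; apply: hom_zero_to_sh_filtered FM => Y [j Yj].
exact: iso_hom_zero_r (iso_sh T Yj) (@hom_zero_Q_sh_Theta l j).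
Qed.

Lemma hom_zero_K_Theta j k : le k j -> hom_zero (ps_K PS j) (Th k).
Proof.
move=> kj; apply: hom_zero_from_filtered (inF_filtered (ps_K_filt PS j)).
move=> Y [l [jl Yl]]; apply: iso_hom_zero_l Yl _.
exact: ps_Theta_dir (ps_le_lt_trans kj jl).
Qed.

Lemma hom_zero_Theta_sh_Theta j k : le k j -> hom_zero (Th j) (sh (Th k)).
Proof.
move=> kj u; have d := dist_rot (ps_dist PS j).
have [v ->] := dist_weak_cokernel (u := u) d (hom_zero_Q_sh_Theta _).
by have [v0 ->] := shm_surj v; rewrite (hom_zero_K_Theta kj v0) shm0 comp0m.
Qed.

Lemma ps_b_neq0 j : ps_b PS j <> 0.
Proof.
move=> b0; apply: (ps_Theta_nz (p := PS) (i := j)); rewrite /is_zero.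
have [v ->] := dist_weak_cokernel (u := idm (Th j)) (dist_rot (ps_dist PS j))
  ltac:(by rewrite comp1m b0).
by rewrite (ps_K_hom v) comp0m.
Qed.

Lemma hom_zero_Theta_gt i0 k (N : C) :
  filtered (Theta_gt (Some i0)) N -> le k i0 -> hom_zero N (Th k).
Proof.
move=> FN ki0; apply: hom_zero_from_filtered FN => Y [l i0l Yl].
exact: iso_hom_zero_l Yl (ps_Theta_dir (ps_le_lt_trans ki0 i0l)).
Qed.

(* At a step [l] with factor Theta(k), the projection M_{l+1} -> Theta(k) is
   non-zero because [ps_b k] factors through it; it extends to [N] since
   Hom(Theta(j), Theta(k)[1]) = 0 for the later factors Theta(j), j >= k. *)
Lemma minF_hom_neq0 (N : C) (FN : filtration T (ThetaCls PS) N) k :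
  minF FN (Some k) -> exists u : Mor N (Th k), u <> 0.
Proof.
case=> [[l [/andP [l1 ll] [f [g [gf fg]]]]] kmin].
have FMl : filtered (ThetaCls PS) (fM FN l).
  exact: filtration_prefix_filtered (@f_XP _ _ _ _ _ FN) _ (leqW ll).
have [q gbE] := dist_weak_kernel (u := mcomp g (ps_b PS k)) (dist_rot (f_dist ll))
  (hom_zero_Q_sh_filtered FMl _).
apply: (filtration_extend_neq0 (u := mcomp f (fb FN l))) ll _.
  move=> fb0; apply: (ps_b_neq0 (j := k)).
  by rewrite -[ps_b PS k]comp1m -fg -Defs.compA gbE Defs.compA fb0 comp0m.
move=> m /andP [lm mn].
have m1 : (1 <= m <= flen FN)%N by rewrite mn (leq_trans l1 (ltnW lm)).
have [j Xj] := f_XP m1.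
have Sj : inSuppF FN j by exists m; split.
exact: iso_hom_zero_l Xj (hom_zero_Theta_sh_Theta (kmin j Sj)).
Qed.

Lemma minF_gt i (M N : C) (FN : filtration T (ThetaCls PS) N) o :
  ~ is_zero M -> filtered (Theta_ge i) M -> filtered (Theta_gt i) N ->
  minF FN o -> lt_opt PS i o.
Proof.
case: i => [i0|] nzM FM FN'; last by case: nzM; apply: filtered_pred0 FM => Y [].
case: o => [k|] //= kmin; have [u nu] := minF_hom_neq0 kmin.
have not_le_k_i0 : ~ le k i0 by move=> ki0; exact/nu/(hom_zero_Theta_gt FN' ki0 u).
have [ki0|i0k] := eqVneq i0 k; first by case: not_le_k_i0; rewrite ki0 ps_refl.
by case/orP: (ps_total PS i0 k) => [-> // | /not_le_k_i0].
Qed.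

Lemma minF_filtered_ge (M : C) (FM : filtration T (ThetaCls PS) M) i :
  minF FM i -> filtered (Theta_ge i) M.
Proof.
move=> imin; rewrite -(f_end FM); apply: filtration_prefix_filtered (leqnn _) => k kn.
have [j Xj] := f_XP kn; exists j => //.
have Sj : inSuppF FM j by exists k; split.
by case: i imin => [i0 [_ /(_ j Sj)] | /(_ j Sj)].
Qed.

Lemma Theta_approximation i (X : C) (inj : forall k, Mor (Q k) X)
    (proj : forall k, Mor X (Q k)) (M : C) :
  is_dsum (ge_opt PS i) inj proj -> filtered (Theta_ge i) M ->
  exists N Q0, [/\ triangle N Q0 M, filtered (Theta_gt i) N & in_add X Q0].
Proof.
move=> dX; elim=> [M0 zM0 | A M0 Y trA FA [N [Q0 [trN FN AQ]]] [j ij Yj]].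
  exists M0, M0; split; [| exact: filtered_zero | exact: in_add_zero].
  by exists (idm M0), 0, 0; exact: TR1_id.
apply: approximation_step trN trA _ _ FN _ AQ (in_add_dsum T dX ij).
- apply: triangle_iso (iso_refl _) (iso_refl _) (iso_sym Yj).
  by do 3!eexists; exact: ps_dist.
- apply: hom_zero_Q_sh_filtered; apply: filtered_mono FA => Z [l _ Zl].
  by exists l.
- apply: filtered_mono (inF_filtered (ps_K_filt PS j)) => Z [l [jl Zl]].
  exists l => //; move: ij; case: (i) => [i0|] //= i0j.
  exact: ps_le_lt_trans i0j jl.
Qed.

Lemma inPTheta_Q l : inPTheta PS (Q l).
Proof.
by move=> L /inF_filtered FL; exact: hom_zero_Q_sh_filtered.
Qed.

Lemma inPTheta_dsum (I : finType) (P : pred I) (A : I -> C) (S : C)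
    (inj : forall k, Mor (A k) S) (proj : forall k, Mor S (A k)) :
  is_dsum P inj proj -> (forall k, P k -> inPTheta PS (A k)) -> inPTheta PS S.
Proof. by move=> dS HA L FL; apply: hom_zero_dsum dS _ => k Pk; exact: HA. Qed.

Lemma inPTheta_in_add (X Y : C) : in_add X Y -> inPTheta PS X -> inPTheta PS Y.
Proof. by move=> AY HX L FL; apply: hom_zero_in_add AY _; exact: HX. Qed.

Lemma is_precover_dist (N Q0 M : C) (a : Mor N Q0) (eps : Mor Q0 M)
    (c : Mor M (sh N)) :
  dist T a eps c -> inPTheta PS Q0 -> inF T (ThetaCls PS) N -> is_precover PS eps.
Proof.
move=> d PQ0 FN; split=> // Z f PZ.
by have [g ->] := dist_weak_kernel (u := f) (dist_rot d) (PZ N FN (mcomp c f)); exists g.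
Qed.

End ProjectiveSystem.

Local Close Scope ring_scope.
Unset Implicit Arguments.

Theorem theorem5p13 (R : comPzRingType) (C : RCat R) (T : Triangulated C)
  (HF : hom_finite C) (t : nat) (PS : proj_system T t)
  (M : C) (FM : filtration T (ThetaCls PS) M) (i : option 'I_t)
  (Hi : minF FM i) :
  exists (N Q0 : C) (a : Mor N Q0) (eps : Mor Q0 M) (c : Mor M (sh T N)),
    [/\ dist T a eps c,
        inF T (ThetaCls PS) N /\
          (exists X : C, is_dsum_of (ge_opt PS i) (ps_Q PS) X /\ in_add X Q0),
        (~ is_zero M -> forall (FN : filtration T (ThetaCls PS) N) (o : option 'I_t),
            minF FN o -> lt_opt PS i o)
      & is_precover PS eps].
Proof.
have [X [inj [proj dX]]] := is_dsum_exists T (ge_opt PS i) (ps_Q PS).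
have FM' := minF_filtered_ge Hi.
have [N [Q0 [[a [eps [c d]]] FN AQ]]] := Theta_approximation dX FM'.
have NF : inF T (ThetaCls PS) N.
  by apply/filtered_inF/(filtered_mono _ FN) => Y [l _ Yl]; exists l.
exists N, Q0, a, eps, c; split=> //.
- by split=> //; exists X; split=> //; exists inj, proj.
- by move=> nzM FN' o; exact: minF_gt nzM FM' FN.
- apply: is_precover_dist d _ NF; apply: inPTheta_in_add AQ _.
  by apply: inPTheta_dsum dX _ => k _; exact: inPTheta_Q.
Qed.
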